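(* Let $n\geqslant 3$ and fix a caterpillar species tree $S$ with $n$ leaves. Among all caterpillar gene trees $G\neq S$ on the same label set, (i) the largest number of coalescent histories for $(G,S)$ is attained when the roadblock set $B_{G,S}$ consists of the single point $(\frac n2-1,\frac n2-1)$ or $(\frac n2,\frac n2)$ if $n$ is even, or of the single point $(\frac{n-1}{2},\frac{n-1}{2})$ if $n$ is odd; and (ii) this largest number equals $C_{n-1}-C_{\lfloor (n-1)/2\rfloor}C_{\lceil (n-1)/2\rceil}$, where $C_m=\frac{1}{m+1}\binom{2m}{m}$.
   Context: All trees are binary, rooted, leaf-labeled; $G\neq S$ means different labeled topologies. A caterpillar tree with $n$ leaves is one in which some internal node is descended from all other internal nodes. Its canonical label vector $(x_1,\dots,x_n)$ has $x_1,x_2$ the labels of the two cherry leaves and, for $3\leqslant i\leqslant n$, $x_i$ the label of the leaf separated from the root by $n-i+1$ edges. Internal nodes are numbered $1,\dots,n-1$ from cherry to root; internal edge $i$ is the edge above node $i$, with an extra edge $n-1$ above the root. A coalescent history for $(G,S)$ is a map $h$ from internal nodes of $G$ to internal edges of $S$ such that (1) every label of a leaf below node $v$ of $G$ labels a leaf of $S$ below edge $h(v)$, and (2) if $v_2$ is descended from $v_1$ in $G$ then $h(v_2)$ is descended from $h(v_1)$ (objects are descended from themselves). With $\mathbf g,\mathbf s$ the canonical vectors of $G,S$, $\sigma(x)$ the index of $x$ in $\mathbf s$ and $F(j)=\max\{\sigma(g_1),\dots,\sigma(g_{j+1})\}-1$, the roadblock set is $B_{G,S}=\{(i,j)\in\mathbb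 Z^2:1\leqslant j\leqslant i\leqslant n-1,\ i<F(j)\}$. *)

(* Caterpillar trees on the label set 'I_n, represented by
   their canonical label vectors (x_1,...,x_n), stored 0-based as a
   permutation x : {perm 'I_n} with x_{p+1} = x p. *)
From mathcomp Require Import all_boot all_order all_fingroup.
Set Implicit Arguments. Unset Strict Implicit. Unset Printing Implicit Defensive.

Section Caterpillar.
Variable n : nat.

(* Two canonical vectors describe the same labeled topology iff they have
   the same (unordered) cherry {x_1,x_2} and agree at positions 3..n. *)
Definition same_tree (x y : {perm 'I_n}) : bool :=
  ([set x p | p : 'I_n & (p < 2)%N] == [set y p | p : 'I_n & (p < 2)%N])
  && [forall p : 'I_n, (2 <= p)%N ==> (x p == y p)].

(* Internal edge i of a
   caterpillar is the edge above node i, so the leaves below edge i are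
   node_leaves x i (edge n-1, above the root, lies above all leaves). *)
Definition node_leaves (x : {perm 'I_n}) (j : nat) : {set 'I_n} :=
  [set x p | p : 'I_n & (p < j.+1)%N].
Definition edge_leaves (x : {perm 'I_n}) (i : nat) : {set 'I_n} :=
  node_leaves x i.

(* In a caterpillar, internal node j2 is descended from internal node j1
   iff j2 <= j1; likewise for internal edges (edge i is above node i). *)
Definition cat_desc (j2 j1 : nat) : bool := (j2 <= j1)%N.

(* A coalescent history: internal nodes 1..n-1 of G (ordinal v <-> node v+1)
   mapped to internal edges 1..n-1 of S (ordinal e <-> edge e+1). *)
Definition is_history (G S : {perm 'I_n}) (h : {ffun 'I_n.-1 -> 'I_n.-1}) : bool :=
  [forall v : 'I_n.-1, node_leaves G v.+1 \subset edge_leaves S (h v).+1]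
  && [forall v1 : 'I_n.-1, forall v2 : 'I_n.-1,
        cat_desc v2.+1 v1.+1 ==> cat_desc (h v2).+1 (h v1).+1].

Definition num_histories (G S : {perm 'I_n}) : nat :=
  #|[set h : {ffun 'I_n.-1 -> 'I_n.-1} | is_history G S h]|.

(* sigma(a) = 1-based index of label a in the canonical vector of S. *)
Definition sigma (S : {perm 'I_n}) (a : 'I_n) : nat := (perm_inv S a).+1.

Definition Ffun (G S : {perm 'I_n}) (j : nat) : nat :=
  (\max_(p : 'I_n | (p < j.+1)%N) sigma S (G p)) - 1.

Definition roadblock (G S : {perm 'I_n}) : pred (nat * nat) :=
  fun ij => [&& (1 <= ij.2)%N, (ij.2 <= ij.1)%N, (ij.1 <= n - 1)%N
              & (ij.1 < Ffun G S ij.2)%N].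

End Caterpillar.

Definition catalan (m : nat) : nat := 'C(m.*2, m) %/ m.+1.

Definition opt_point (n k : nat) : bool :=
  if odd n then k == (n - 1)./2 else (k == n./2 - 1) || (k == n./2).

From mathcomp Require Import all_boot all_order all_fingroup.
From mathcomp Require Import zify.
Set Implicit Arguments. Unset Strict Implicit. Unset Printing Implicit Defensive.

(* For caterpillars, a coalescent history is a nondecreasing map h from nodes
   to edges, and condition (1) at node j says exactly h(j) >= F(j): histories
   are the nondecreasing sequences bounded below by F, and raising F lowers
   their number.  For G = S one has F(j) = j and the count is the Catalan number
   C_(n-1).  If G <> S then F(j) > j for some 1 <= j < n-1; raising the identity
   bound at j alone removes exactly the sequences through the diagonal point j,
   which factor into C_j * C_(n-1-j) pairs.  Log-convexity of the Catalan
   numbers makes this product smallest for j in the middle, and the roadblock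
   set is the single point (k,k) precisely when F is the identity raised at k. *)

(* [ballot o l t] counts the nondecreasing sequences s_0 <= ... <= s_(l-1) <= t
   with o + i <= s_i, by summing over the last entry. *)
Fixpoint ballot (o l t : nat) : nat :=
  if l is l'.+1 then \sum_(o + l' <= s < t.+1) ballot o l' s else 1.

Lemma ballotS o l t : ballot o l.+1 t = \sum_(o + l <= s < t.+1) ballot o l s.
Proof. by []. Qed.

Lemma ballot_shift o l t : ballot o l (t + o) = ballot 0 l t.
Proof.
elim: l t => [//|l IHl] t.
rewrite !ballotS add0n [o + l]addnC big_addn.
have -> : (t + o).+1 - o = t.+1 by lia.
by apply: eq_bigr => s _; rewrite IHl.
Qed.

Lemma ballot_binom l t : l <= t.+1 ->
  ballot 0 l.+1 t + 'C(t + l.+2, l) = 'C(t + l.+2, l.+1).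
Proof.
elim: l t => [|l IHl] t.
  move=> _; rewrite ballotS (eq_bigr (fun _ => 1)) // sum_nat_const_nat bin0 bin1.
  lia.
have diag : ballot 0 l.+2 l + 'C(l + l.+3, l.+1) = 'C(l + l.+3, l.+2).
  rewrite ballotS big_geq ?add0n // -bin_sub; last by lia.
  by congr binomial; lia.
elim: t => [|t IHt] le_lt1; first by move: diag; have -> : l = 0 by lia.
case: (ltnP l t.+1) => [lt_lt1|?]; last by have -> : t.+1 = l by lia.
have ballot_split : ballot 0 l.+2 t.+1 = ballot 0 l.+2 t + ballot 0 l.+1 t.+1.
  by rewrite [LHS]ballotS big_nat_recr.
have := IHl t.+1 (leqW (ltnW lt_lt1)); have := IHt lt_lt1.
rewrite ballot_split (addSnnS t l.+2) addSn !binS.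
lia.
Qed.

Lemma bin_mid_ballot x : 'C(x.*2, x) = x.+1 * ballot 0 x x.-1.
Proof.
case: x => [//|x].
have := ballot_binom (leqW (leqnn x)); have := mul_bin_left x.+1.*2 x.
rewrite (_ : x + x.+2 = x.+1.*2); last by rewrite -addnn; lia.
rewrite (_ : x.+1.*2 - x = x.+2); last by lia.
rewrite /=; set c := 'C(_, x.+1); set d := 'C(_, x).
nia.
Qed.

Lemma catalan_ballot x : catalan x = ballot 0 x x.-1.
Proof. by rewrite /catalan bin_mid_ballot mulKn. Qed.

Lemma catalan_rec a : a.+2 * catalan a.+1 = 2 * a.*2.+1 * catalan a.
Proof.
have bin_mid x : 'C(x.*2, x) = x.+1 * catalan x by rewrite catalan_ballot bin_mid_ballot.
have := mul_bin_diag a.+1.*2 a; have := mul_bin_down a.*2.+1 a.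
rewrite !bin_mid doubleS /= (_ : a.*2.+1 - a = a.+1); last by lia.
set B := 'C(a.*2.+1, a) => down diag.
apply/eqP; rewrite -(eqn_pmul2l (ltn0Sn a)) -(eqn_pmul2l (ltn0Sn a)); apply/eqP.
nia.
Qed.

Lemma catalan_log_convex a c : a <= c ->
  catalan a.+1 * catalan c <= catalan a * catalan c.+1.
Proof.
move=> le_ac; rewrite -(@leq_pmul2l (a.+2 * c.+2)) //.
have := catalan_rec a; have := catalan_rec c.
set A1 := catalan a.+1; set A0 := catalan a; set C1 := catalan c.+1; set C0 := catalan c.
move=> rec_c rec_a.
have -> : a.+2 * c.+2 * (A1 * C0) = c.+2 * (2 * a.*2.+1) * (A0 * C0) by nia.
have -> : a.+2 * c.+2 * (A0 * C1) = a.+2 * (2 * c.*2.+1) * (A0 * C0) by nia.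
by rewrite leq_mul2r; apply/orP; right; nia.
Qed.

Lemma leq_catalan_half N j : j <= N ->
  catalan N./2 * catalan (uphalf N) <= catalan j * catalan (N - j).
Proof.
have N_halves : N./2 + uphalf N = N by rewrite uphalf_half addnCA addnn odd_double_half.
wlog le_j_half : j / j <= N./2.
  move=> wlog_le le_jN; have [le_j_half|lt_half_j] := leqP j N./2; first exact: wlog_le.
  by rewrite [X in _ <= X]mulnC; have := wlog_le (N - j); rewrite subKn //; apply; lia.
move=> _; rewrite (_ : uphalf N = N - N./2); last by lia.
pose f i := catalan i * catalan (N - i).
have f_step : {in [pred i | i <= N./2], forall i, i.+1 \in [pred i | i <= N./2] ->
    f i.+1 <= f i}.
  move=> i _; rewrite inE => le_i1_half.
  rewrite /f (_ : N - i = (N - i.+1).+1); last by lia.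
  by apply: catalan_log_convex; lia.
have f_mono := homo_leq_in (r := fun x y => y <= x) leqnn
  (fun y x z le_yx le_zy => leq_trans le_zy le_yx) _ f_step.
apply: f_mono => //; rewrite ?inE //.
by move=> x y _ le_y i /andP[_ lt_iy]; apply: leq_trans (ltnW lt_iy) le_y.
Qed.

Definition mono_bounded k N (f : nat -> nat) (t : nat)
    (h : {ffun 'I_k -> 'I_N}) : bool :=
  [forall i : 'I_k, forall j : 'I_k, (i <= j) ==> (h i <= h j)]
  && [forall i : 'I_k, f i <= h i <= t].

Definition num_mono k N (f : nat -> nat) (t : nat) : nat :=
  #|[set h : {ffun 'I_k -> 'I_N} | mono_bounded f t h]|.

Lemma mono_boundedP k N (f : nat -> nat) t (h : {ffun 'I_k -> 'I_N}) :
  reflect ((forall i j : 'I_k, i <= j -> h i <= h j) /\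
           (forall i : 'I_k, f i <= h i <= t))
          (mono_bounded f t h).
Proof.
apply: (iffP andP) => [[/forallP mono /forallP bnd]|[mono bnd]]; split.
- by move=> i j; apply/implyP/(forallP (mono i)).
- exact: bnd.
- by apply/forallP=> i; apply/forallP=> j; apply/implyP/mono.
- exact/forallP.
Qed.

Lemma num_mono0 N (f : nat -> nat) t : num_mono 0 N f t = 1.
Proof.
rewrite /num_mono (eq_card (B := {ffun 'I_0 -> 'I_N})).
  by rewrite card_ffun !card_ord.
by move=> h; rewrite !inE; apply/mono_boundedP; split; case.
Qed.

Section FfunRcons.
Variables k N : nat.

Definition ffun_rcons (p : 'I_N * {ffun 'I_k -> 'I_N}) : {ffun 'I_k.+1 -> 'I_N} :=
  [ffun i => if unlift ord_max i is Some j then p.2 j else p.1].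

Lemma ffun_rcons_lift p j : ffun_rcons p (lift ord_max j) = p.2 j.
Proof. by rewrite ffunE liftK. Qed.

Lemma ffun_rcons_max p : ffun_rcons p ord_max = p.1.
Proof. by rewrite ffunE unlift_none. Qed.

Lemma ffun_rcons_bij : bijective ffun_rcons.
Proof.
exists (fun h : {ffun 'I_k.+1 -> 'I_N} => (h ord_max, [ffun j => h (lift ord_max j)])).
  case=> s g; rewrite ffun_rcons_max; congr pair.
  by apply/ffunP => j; rewrite ffunE ffun_rcons_lift.
move=> h; apply/ffunP => i; rewrite ffunE /=.
by case: unliftP => [j ->|->] //; rewrite ffunE.
Qed.

Lemma mono_bounded_rcons (f : nat -> nat) t p :
  mono_bounded f t (ffun_rcons p) = (f k <= p.1 <= t) && mono_bounded f p.1 p.2.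
Proof.
case: p => s g /=.
apply/mono_boundedP/andP => [[mono bnd]|[/andP[le_fs le_st] /mono_boundedP[mono bnd]]].
  split; first by have := bnd ord_max; rewrite ffun_rcons_max.
  apply/mono_boundedP; split=> [i j le_ij|i].
    have := mono (lift ord_max i) (lift ord_max j).
    by rewrite !ffun_rcons_lift !lift_max; apply.
  have := bnd (lift ord_max i); rewrite ffun_rcons_lift lift_max => /andP[-> _] /=.
  have := mono (lift ord_max i) ord_max; rewrite ffun_rcons_lift ffun_rcons_max lift_max.
  by apply; rewrite ltnW.
split=> [i j|i].
  case: (unliftP ord_max i) => [i' ->|->]; case: (unliftP ord_max j) => [j' ->|->];
    rewrite ?ffun_rcons_lift ?ffun_rcons_max ?lift_max //=.
  - exact: mono.
  - by move=> _; have /andP[] := bnd i'.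
  - by rewrite leqNgt ltn_ord.
case: (unliftP ord_max i) => [i' ->|->];
  rewrite ?ffun_rcons_lift ?ffun_rcons_max ?lift_max.
  by have /andP[-> le_s] := bnd i'; rewrite (leq_trans le_s).
by rewrite /= le_fs.
Qed.

End FfunRcons.

Lemma num_monoS k N (f : nat -> nat) t : t < N ->
  num_mono k.+1 N f t = \sum_(f k <= s < t.+1) num_mono k N f s.
Proof.
move=> lt_tN; rewrite /num_mono -sum1_card.
rewrite (eq_bigl (mono_bounded f t)); last by move=> h; rewrite inE.
rewrite (reindex (@ffun_rcons k N)); last exact/onW_bij/ffun_rcons_bij.
rewrite (eq_bigl (fun p : 'I_N * {ffun 'I_k -> 'I_N} =>
    (f k <= p.1 <= t) && mono_bounded f p.1 p.2)); last first.
  by move=> p; rewrite mono_bounded_rcons.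
rewrite -(pair_big_dep (fun s : 'I_N => f k <= s <= t) (fun s g => mono_bounded f s g)
  (fun _ _ => 1)) /=.
rewrite (eq_bigr (fun s : 'I_N => num_mono k N f s)); last first.
  by move=> s _; rewrite /num_mono -sum1_card; apply: eq_bigl => h; rewrite inE.
rewrite -(big_mkord (fun s => f k <= s <= t) (num_mono k N f)).
by rewrite [RHS](big_nat_widenl _ 0) // [RHS](big_nat_widen _ _ N).
Qed.

Lemma eq_num_mono k N (f1 f2 : nat -> nat) t : (forall v, v < k -> f1 v = f2 v) ->
  num_mono k N f1 t = num_mono k N f2 t.
Proof.
move=> eq_f; apply: eq_card => h; rewrite !inE.
by apply/mono_boundedP/mono_boundedP => -[mono bnd]; split=> // i;
  rewrite ?eq_f // -?eq_f //; apply: bnd.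
Qed.

Lemma leq_num_mono k N (f1 f2 : nat -> nat) t : (forall v, v < k -> f1 v <= f2 v) ->
  num_mono k N f2 t <= num_mono k N f1 t.
Proof.
move=> le_f; apply/subset_leq_card/subsetP => h; rewrite !inE.
case/mono_boundedP => mono bnd; apply/mono_boundedP; split=> // i.
by have /andP[le_fh ->] := bnd i; rewrite andbT (leq_trans (le_f _ (ltn_ord i))).
Qed.

Lemma num_mono_id k N (f : nat -> nat) t : (forall v, v < k -> f v = v) -> t < N ->
  num_mono k N f t = ballot 0 k t.
Proof.
elim: k t => [|k IHk] t f_id lt_tN; first exact: num_mono0.
rewrite num_monoS // ballotS add0n f_id //.
apply: eq_big_nat => s /andP[_ lt_st]; apply: IHk; last exact: leq_ltn_trans lt_tN.
by move=> v lt_vk; apply/f_id/ltnW.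
Qed.

Definition raise_at (k0 v : nat) : nat := if v == k0 then k0.+1 else v.

(* A sequence above the diagonal that is not above [raise_at k0] has s_k0 = k0,
   so it splits into a prefix bounded by k0 and an independent suffix. *)
Lemma num_mono_raise k0 d N t : t < N -> k0 + d <= t ->
  num_mono (k0.+1 + d) N (raise_at k0) t + ballot 0 k0 k0 * ballot k0.+1 d t =
  ballot 0 (k0.+1 + d) t.
Proof.
elim: d t => [|d IHd] t lt_tN le_t.
  rewrite addn0 num_monoS // /raise_at eqxx [RHS]ballotS add0n [RHS]big_ltn; last by lia.
  rewrite muln1 addnC; congr (_ + _).
  apply: eq_big_nat => s /andP[_ lt_st]; apply: num_mono_id; last by lia.
  by move=> v lt_vk; rewrite (ltn_eqF lt_vk).
rewrite addnS num_monoS // [RHS]ballotS add0n ballotS big_distrr.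
have -> : raise_at k0 (k0.+1 + d) = k0.+1 + d by rewrite /raise_at; case: eqP; lia.
rewrite -big_split /=.
by apply: eq_big_nat => s /andP[le_s lt_st]; apply: IHd; lia.
Qed.

Lemma num_mono_raise_catalan N k : 0 < k < N ->
  num_mono N N (raise_at k.-1) N.-1 + catalan k * catalan (N - k) = catalan N.
Proof.
case: k => [//|k] /= lt_kN.
have := @num_mono_raise k (N - k.+1) N N.-1 ltac:(lia) ltac:(lia).
rewrite (_ : k.+1 + (N - k.+1) = N); last by lia.
rewrite (catalan_ballot N) => <-; congr (_ + _ * _).
  by rewrite catalan_ballot /= add0n big_nat1.
rewrite (_ : N.-1 = (N - k.+1).-1 + k.+1); last by lia.
by rewrite ballot_shift -catalan_ballot.
Qed.

Lemma perm_stable_imset (T : finType) (g : {perm T}) (A : {set T}) :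
  g @: A \subset A -> g @: A = A.
Proof.
by move=> sub; apply/setP/subset_cardP => //; rewrite card_imset //; apply: perm_inj.
Qed.

Section Caterpillars.
Variable n : nat.
Implicit Types G S : {perm 'I_n}.

Definition prefix m : {set 'I_n} := [set p : 'I_n | p < m].

(* Position in [S] of the label at position [p] in [G]. *)
Definition rel_perm G S : {perm 'I_n} := (G * S^-1)%g.

Lemma rel_permK G S p : S (rel_perm G S p) = G p.
Proof. by rewrite permM permKV. Qed.

Lemma FfunE G S j : Ffun G S j = \max_(p : 'I_n | p < j.+1) rel_perm G S p.
Proof.
have predn_max : {morph predn : x y / maxn x y}.
  by move=> [|x] [|y]; rewrite ?maxn0 ?max0n ?maxnSS.
rewrite /Ffun subn1 (big_morph predn predn_max (erefl 0 : 0.-1 = 0)).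
by apply: eq_bigr => p _; rewrite /sigma -permM.
Qed.

Lemma Ffun_leq G S j i :
  (Ffun G S j <= i) = [forall p : 'I_n, (p < j.+1) ==> (rel_perm G S p <= i)].
Proof.
rewrite FfunE; apply/bigmax_leqP/forallP => [le_i p|le_i p]; apply/implyP => //.
exact: le_i.
Qed.

Lemma leaves_subset_Ffun G S j i :
  (node_leaves G j \subset edge_leaves S i) = (Ffun G S j <= i).
Proof.
rewrite Ffun_leq; apply/subsetP/forallP => [sub p|le_i x /imsetP[q]].
  apply/implyP => lt_pj; have /sub/imsetP[q] : G p \in node_leaves G j.
    by apply: imset_f; rewrite inE.
  by rewrite inE -(rel_permK G S) => le_qi /perm_inj eq_pq; rewrite eq_pq.
rewrite inE => lt_qj ->; apply/imsetP; exists (rel_perm G S q).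
  by rewrite inE; apply: (implyP (le_i q)).
by rewrite rel_permK.
Qed.

Lemma Ffun_leq_prefix G S j i :
  (Ffun G S j <= i) = (rel_perm G S @: prefix j.+1 \subset prefix i.+1).
Proof.
rewrite Ffun_leq; apply/forallP/subsetP => [le_i x /imsetP[p]|sub p].
  by rewrite !inE => lt_pj ->; apply: (implyP (le_i p)).
apply/implyP => lt_pj; have := sub (rel_perm G S p); rewrite !inE; apply.
by apply: imset_f; rewrite inE.
Qed.

Lemma Ffun_le G S j : Ffun G S j <= n.-1.
Proof.
rewrite Ffun_leq; apply/forallP => p; apply/implyP => _.
by rewrite -ltnS (ltn_predK (ltn_ord p)).
Qed.

Lemma rel_perm_prefix G S j :
  Ffun G S j <= j -> rel_perm G S @: prefix j.+1 = prefix j.+1.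
Proof. by rewrite Ffun_leq_prefix; apply: perm_stable_imset. Qed.

Lemma Ffun_geq G S j : j < n -> j <= Ffun G S j.
Proof.
case: j => [//|j] lt_jn; rewrite leqNgt; apply/negP => lt_F.
have stable : rel_perm G S @: prefix j.+2 = prefix j.+2.
  exact/rel_perm_prefix/ltnW.
have : Ordinal lt_jn \in rel_perm G S @: prefix j.+2 by rewrite stable inE.
case/imsetP => p; rewrite inE => lt_pj /(congr1 val) /= eq_jp.
by move: lt_F; rewrite ltnS Ffun_leq => /forallP/(_ p); rewrite lt_pj -eq_jp ltnn.
Qed.

Lemma Ffun_eq G S j v :
  (forall p : 'I_n, p < j.+1 -> rel_perm G S p <= v) ->
  (exists2 p : 'I_n, p < j.+1 & rel_perm G S p = v :> nat) ->
  Ffun G S j = v.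
Proof.
move=> le_v [p lt_pj eq_pv]; apply/eqP; rewrite eqn_leq FfunE.
by apply/andP; split; [apply/bigmax_leqP | rewrite -eq_pv; apply: leq_bigmax_cond].
Qed.

Lemma same_tree_Ffun G S : 1 < n ->
  (forall j, 0 < j < n.-1 -> Ffun G S j <= j) -> same_tree G S.
Proof.
move=> lt1n le_Fj; set g := rel_perm G S.
have stable j : 0 < j < n -> g @: prefix j.+1 = prefix j.+1.
  case/andP=> j_gt0 lt_jn; apply: rel_perm_prefix.
  have [|] := ltnP j n.-1; first by move=> ?; apply: le_Fj; rewrite j_gt0.
  by apply: leq_trans (Ffun_le G S j).
have g_prefix j p : 0 < j < n -> (g p < j.+1) = (p < j.+1).
  move/stable => stable_j; have := mem_imset (prefix j.+1) p (@perm_inj _ g).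
  by rewrite stable_j !inE.
have g_fix (p : 'I_n) : 1 < p -> g p = p.
  move=> lt1p; have lt_pn := ltn_ord p.
  have le_gp : g p <= p by rewrite -ltnS g_prefix //; lia.
  have : (g p < p.-1.+1) = (p < p.-1.+1) by apply: g_prefix; lia.
  rewrite prednK ?ltnn; last lia.
  move=> /negbT; rewrite -leqNgt => ge_gp.
  by apply/val_inj/eqP; rewrite eqn_leq le_gp.
apply/andP; split.
  apply/eqP/setP => x; apply/imsetP/imsetP => -[p]; rewrite inE => lt_p2 ->.
    by exists (g p); rewrite ?inE ?g_prefix ?lt1n ?rel_permK.
  have : p \in g @: prefix 2 by rewrite stable ?lt1n // inE.
  by case/imsetP => q; rewrite inE => lt_q2 ->; exists q; rewrite ?inE ?rel_permK.
by apply/forallP => p; apply/implyP => lt1p; rewrite -(rel_permK G S) g_fix.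
Qed.

Lemma num_histories_mono G S :
  num_histories G S = num_mono n.-1 n.-1 (fun v => (Ffun G S v.+1).-1) n.-2.
Proof.
apply: eq_card => h; rewrite !inE /is_history.
apply/andP/mono_boundedP => [[/forallP sub /forallP mono]|[mono bnd]]; split.
- by move=> i j le_ij; have /forallP/(_ i)/implyP := mono j; apply.
- move=> v; move: (sub v) (ltn_ord (h v)).
  rewrite leaves_subset_Ffun => le_F lt_hn.
  by apply/andP; split; [lia | rewrite -ltnS (ltn_predK lt_hn)].
- apply/forallP => v; rewrite leaves_subset_Ffun.
  by have /andP[le_F _] := bnd v; lia.
- by apply/forallP => v1; apply/forallP => v2; apply/implyP => /mono.
Qed.

Lemma exists_Ffun_raise_at S k : 0 < k -> k.+1 < n ->
  exists G, ~~ same_tree G S /\ forall j, j < n -> Ffun G S j = raise_at k j.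
Proof.
move=> k_gt0 lt_k1n; set a := Ordinal (ltnW lt_k1n); set b := Ordinal lt_k1n.
exists (tperm a b * S)%g.
have gE p : (rel_perm (tperm a b * S)%g S p : nat) =
    if p == k :> nat then k.+1 else if p == k.+1 :> nat then k else p.
  rewrite /rel_perm -mulgA mulgV mulg1.
  case: tpermP => [->|->|ne_pa ne_pb] /=; rewrite ?eqxx //; first by case: eqP; lia.
  case: eqP => [eq_pa|_]; first by case: ne_pa; apply: val_inj.
  by case: eqP => [eq_pb|//]; case: ne_pb; apply: val_inj.
split.
  apply/negP => /andP[_ /forallP/(_ b)]; rewrite /= ltnS k_gt0 => /eqP.
  by rewrite permM => /perm_inj; rewrite tpermR => /(congr1 val) /=; lia.
move=> j lt_jn; apply: Ffun_eq => [p lt_pj|].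
  by rewrite gE /raise_at; repeat case: eqP => ? //; lia.
rewrite /raise_at; case: eqP => [->|ne_jk]; first by exists a; rewrite // gE eqxx.
case: (j =P k.+1) => [->|ne_jk1]; first by exists a; rewrite // gE eqxx.
exists (Ordinal lt_jn) => //; rewrite gE /=.
by case: eqP => // _; case: eqP.
Qed.

Lemma roadblock_single G S k : 0 < k -> k.+1 < n ->
  roadblock G S =1 pred1 (k, k) <-> forall j, 0 < j < n -> Ffun G S j = raise_at k j.
Proof.
move=> k_gt0 lt_k1n; rewrite /roadblock /raise_at; split.
  move=> rb j /andP[j_gt0 lt_jn]; have := Ffun_geq G S lt_jn.
  move: (rb (j, j)) (rb (k.+1, k)); rewrite /= !xpair_eqE subn1 j_gt0 k_gt0 leqnSn leqnn.
  have le_jn : j <= n.-1 by rewrite -ltnS (ltn_predK lt_jn).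
  have lt_kn : k < n.-1 by rewrite -ltnS (ltn_predK lt_k1n).
  rewrite le_jn lt_kn (gtn_eqF (ltnSn k)) /=.
  case: (eqVneq j k) => [->|ne_jk] /=; last by move=> /negbT; rewrite -leqNgt; lia.
  by move=> lt_kF /negbT; rewrite -leqNgt; lia.
move=> FE [i j]; rewrite /= xpair_eqE.
apply/and4P/andP => [[j_gt0 le_ji le_in lt_iF]|[/eqP-> /eqP->]].
  have lt_jn : j < n by apply: leq_ltn_trans le_ji _; rewrite subn1 in le_in; lia.
  move: lt_iF; rewrite FE ?j_gt0 //; case: eqP => [e_jk|_] lt_iF; last by exfalso; lia.
  by split=> //; apply/eqP; lia.
rewrite FE ?k_gt0 ?eqxx //=; last by lia.
by split; lia.
Qed.

Lemma num_histories_neq_le G S : 1 < n -> ~~ same_tree G S ->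
  num_histories G S + catalan (n.-1)./2 * catalan (uphalf n.-1) <= catalan n.-1.
Proof.
move=> lt1n neq_GS.
have : ~~ [forall j : 'I_n.-1, (0 < j) ==> (Ffun G S j <= j)].
  apply: contra neq_GS => /forallP le_Fj.
  apply: same_tree_Ffun => // j /andP[j_gt0 lt_jn].
  exact: (implyP (le_Fj (Ordinal lt_jn))).
case/forallPn => -[j lt_jn] /=; rewrite negb_imply -ltnNge => /andP[j_gt0 lt_jF].
have le_raise : num_histories G S <= num_mono n.-1 n.-1 (raise_at j.-1) n.-2.
  rewrite num_histories_mono; apply: leq_num_mono => v lt_vn; rewrite /raise_at.
  case: eqP => [e_vj|_]; first by move: lt_jF; rewrite -(prednK j_gt0) -e_vj; lia.
  by have := @Ffun_geq G S v.+1 ltac:(lia); lia.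
have := num_mono_raise_catalan (N := n.-1) (k := j) ltac:(lia).
have := leq_catalan_half (ltnW lt_jn).
lia.
Qed.

Lemma num_histories_roadblock_single G S k : 0 < k -> k.+1 < n ->
  roadblock G S =1 pred1 (k, k) ->
  num_histories G S + catalan k * catalan (n.-1 - k) = catalan n.-1.
Proof.
move=> k_gt0 lt_k1n /(roadblock_single G S k_gt0 lt_k1n) FE.
rewrite num_histories_mono (@eq_num_mono _ _ _ (raise_at k.-1)).
  by apply: num_mono_raise_catalan; lia.
move=> v lt_vn; rewrite FE; last by lia.
by rewrite /raise_at; case: eqP => [<-|ne]; case: eqP => [e|ne'] //=; lia.
Qed.

Lemma exists_roadblock_single S k : 0 < k -> k.+1 < n ->
  exists2 G, ~~ same_tree G S & roadblock G S =1 pred1 (k, k).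
Proof.
move=> k_gt0 lt_k1n; have [G [neq_GS FE]] := exists_Ffun_raise_at S k_gt0 lt_k1n.
exists G => //; apply/(roadblock_single G S k_gt0 lt_k1n) => j /andP[_ lt_jn].
exact: FE.
Qed.

End Caterpillars.

Lemma opt_point_balanced n k : 2 < n -> opt_point n k ->
  [/\ 0 < k, k.+1 < n &
      catalan k * catalan (n.-1 - k) = catalan (n.-1)./2 * catalan (uphalf n.-1)].
Proof.
case: n => [//|N] /= lt2N; rewrite /opt_point /= subn1 /=.
have := odd_double_half N; have := uphalf_half N; rewrite uphalfE.
case: (odd N) => /= N_halves half_N; last first.
  by move=> /eqP ->; split; [lia | lia | congr (_ * _); congr catalan; lia].
case/orP => /eqP ->; (split; [lia | lia |]).
  by congr (_ * _); congr catalan; lia.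
by rewrite mulnC; congr (_ * _); congr catalan; lia.
Qed.

Theorem corollary2 (n : nat) (Hn : (3 <= n)%N) (S : {perm 'I_n}) :
  (* the largest number of histories over caterpillar G <> S is at most M ... *)
  (forall G : {perm 'I_n}, ~~ same_tree G S ->
     (num_histories G S <= catalan (n - 1)
        - catalan ((n - 1)./2) * catalan (uphalf (n - 1)))%N)
  (* ... the optimal roadblock configurations occur among G <> S ... *)
  /\ (forall k, opt_point n k ->
        exists G : {perm 'I_n}, ~~ same_tree G S /\ roadblock G S =1 pred1 (k, k))
  (* ... and every such G attains M. *)
  /\ (forall (G : {perm 'I_n}) (k : nat), ~~ same_tree G S -> opt_point n k ->
        roadblock G S =1 pred1 (k, k) ->
        num_histories G S = catalan (n - 1)
          - catalan ((n - 1)./2) * catalan (uphalf (n - 1))).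
Proof.
rewrite subn1; split; [|split].
- move=> G neq_GS; have := num_histories_neq_le (ltnW Hn) neq_GS; lia.
- move=> k /(opt_point_balanced Hn) [k_gt0 lt_k1n _].
  by have [G] := exists_roadblock_single S k_gt0 lt_k1n; exists G.
- move=> G k _ /(opt_point_balanced Hn) [k_gt0 lt_k1n <-] rb.
  have := num_histories_roadblock_single k_gt0 lt_k1n rb; lia.
Qed.
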